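(* Let $u,l\ge1$, $m=lu$, and let $1\le K\le N$ be integers with $K/N\ge2^{-u}+\frac1N$. Consider any erasure pattern in which the total number $e$ of erased modulation symbols satisfies $e\le (N-K+1)/(1-2^{-u})$. Then under the proportional multiplicity assignment (with any $M>0$) the ASD sufficient condition $S\ge\sqrt{2(K-1)C}$ holds; i.e., ASD under PMAS is guaranteed to decode up to $(N-K+1)/(1-2^{-u})$ erasure events.
   Context: Setting (RS coded modulation over an erasure channel): a Reed–Solomon code of length $N$ and dimension $K$ over $GF(2^m)$ with $m=lu$; each RS symbol is transmitted as $l$ modulation symbols ($2^u$-ary QAM or PSK), each carrying $u$ bits, and the channel erases modulation symbols (''erasure events''). An RS symbol in which $b_j\in\{0,\dots,l\}$ modulation symbols are erased is consistent with $2^{ub_j}$ candidate symbols. The proportional multiplicity assignment (PMAS) gives each such candidate multiplicity $M2^{-ub_j}$; the score is $S=\sum_j M2^{-ub_j}$ and the (approximate) cost is $C=\frac12\sum_j2^{ub_j}(M2^{-ub_j})^2$. *)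

From mathcomp Require Import all_boot all_order all_algebra.
Set Implicit Arguments. Unset Strict Implicit. Unset Printing Implicit Defensive.
Import Order.TTheory GRing.Theory Num.Theory.
Local Open Scope ring_scope.

(* An erasure pattern for an RS code of length N: b j = number of erased
   modulation symbols (out of l) in RS symbol j.  Each RS symbol carries
   l modulation symbols of u bits each. *)

Definition erasures (N : nat) (b : 'I_N -> nat) : nat := (\sum_(j < N) b j)%N.

Definition pmas_score (R : fieldType) (u N : nat) (M : R) (b : 'I_N -> nat) : R :=
  \sum_(j < N) M * (2%:R ^- (u * b j)).

(* (Approximate) cost: C = 1/2 sum_j 2^{u b_j} (M 2^{-u b_j})^2. *)
Definition pmas_cost (R : fieldType) (u N : nat) (M : R) (b : 'I_N -> nat) : R :=
  2%:R^-1 * \sum_(j < N) (2%:R ^+ (u * b j)) * (M * 2%:R ^- (u * b j)) ^+ 2.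

(** With [q = 2^-u], both PMAS quantities are multiples of the weight
    [Y = sum_j q^(b_j)]: [S = M Y] and [C = M^2 Y / 2], so the ASD condition
    [S >= sqrt(2 (K-1) C)] reduces to [Y >= K - 1].  Bernoulli's inequality
    [q^b >= 1 - b (1 - q)] gives [Y >= N - e (1 - q)], which is at least [K - 1]
    exactly when [e <= (N - K + 1) / (1 - q)]. *)

From mathcomp Require Import all_boot all_order all_algebra.
From mathcomp Require Import lra.
Set Implicit Arguments. Unset Strict Implicit. Unset Printing Implicit Defensive.
Import Order.TTheory GRing.Theory Num.Theory.
Local Open Scope ring_scope.

Definition pmas_weight {R : fieldType} (u N : nat) (b : 'I_N -> nat) : R :=
  \sum_(j < N) (2%:R ^- u) ^+ b j.

Lemma exprn_ge_bernoulli (R : realDomainType) (q : R) (n : nat) :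
  0 <= q -> 1 - n%:R * (1 - q) <= q ^+ n.
Proof.
move=> q_ge0; elim: n => [|n IHn]; first by rewrite mul0r subr0 expr0.
have step : q * (1 - n%:R * (1 - q)) <= q ^+ n.+1 by rewrite exprS ler_wpM2l.
have sq_ge0 : 0 <= n%:R * (1 - q) ^+ 2 :> R by rewrite mulr_ge0 ?sqr_ge0.
rewrite -natr1 expr2 in sq_ge0 *; nra.
Qed.

Lemma sum_exprn_ge (R : realDomainType) (q : R) (N : nat) (b : 'I_N -> nat) :
  0 <= q -> N%:R - (erasures b)%:R * (1 - q) <= \sum_(j < N) q ^+ b j.
Proof.
move=> q_ge0; rewrite /erasures natr_sum mulr_suml.
rewrite -[N in N%:R]card_ord -sumr_const -sumrB.
by apply: ler_sum => j _; exact: exprn_ge_bernoulli.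
Qed.

Lemma pmas_scoreE (R : fieldType) (u N : nat) (M : R) (b : 'I_N -> nat) :
  pmas_score u M b = M * pmas_weight u b.
Proof.
by rewrite /pmas_score mulr_sumr; apply: eq_bigr => j _; rewrite exprM exprVn.
Qed.

Lemma pmas_costE (R : numFieldType) (u N : nat) (M : R) (b : 'I_N -> nat) :
  pmas_cost u M b = 2%:R^-1 * (M ^+ 2 * pmas_weight u b).
Proof.
rewrite /pmas_cost /pmas_weight; congr (_ * _).
rewrite mulr_sumr; apply: eq_bigr => j _.
have pow2_neq0 : 2%:R ^+ (u * b j) != 0 :> R by rewrite expf_neq0 ?pnatr_eq0.
rewrite exprMn mulrCA; congr (_ * _).
by rewrite expr2 mulrA (mulfV pow2_neq0) mul1r exprM exprVn.
Qed.

Lemma sqrtr_le (R : rcfType) (x y : R) : 0 <= y -> x <= y ^+ 2 -> Num.sqrt x <= y.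
Proof. by move=> y_ge0 x_le; rewrite -(ger0_norm y_ge0) -sqrtr_sqr ler_wsqrtr. Qed.

Lemma pmas_asd_condition (R : rcfType) (u N : nat) (M k : R) (b : 'I_N -> nat) :
  0 <= M -> k <= pmas_weight u b ->
  Num.sqrt (2%:R * k * pmas_cost u M b) <= pmas_score u M b.
Proof.
move=> M_ge0 k_le; rewrite pmas_scoreE pmas_costE.
have Y_ge0 : 0 <= pmas_weight u b :> R.
  by apply: sumr_ge0 => j _; rewrite exprn_ge0 ?invr_ge0 ?exprn_ge0 ?ler0n.
apply: sqrtr_le; first exact: mulr_ge0.
rewrite [2%:R * k]mulrC -mulrA mulVKf ?pnatr_eq0 //.
apply: (le_trans (ler_wpM2r _ k_le)); first by rewrite mulr_ge0 ?sqr_ge0.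
by rewrite mulrCA -expr2 -exprMn.
Qed.

Theorem theorem3 (R : rcfType) (u l N K : nat) (M : R) (b : 'I_N -> nat) :
  (1 <= u)%N -> (1 <= l)%N -> (1 <= K)%N -> (K <= N)%N ->
  K%:R / N%:R >= 2%:R ^- u + 1 / N%:R :> R ->
  (forall j, (b j <= l)%N) ->
  (erasures b)%:R <= (N - K + 1)%:R / (1 - 2%:R ^- u) :> R ->
  0 < M ->
  Num.sqrt (2%:R * (K%:R - 1) * pmas_cost u M b) <= pmas_score u M b.
Proof.
move=> u_ge1 _ _ le_KN _ _ e_le M_gt0.
apply: pmas_asd_condition; first exact: ltW.
set q : R := 2%:R ^- u.
have q_gt0 : 0 < q by rewrite invr_gt0 exprn_gt0.
have q_lt1 : q < 1.
  by rewrite invf_lt1 ?exprn_gt0 // exprn_egt1 ?ltr1n -?lt0n.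
have := sum_exprn_ge b (ltW q_gt0).
rewrite ler_pdivlMr ?subr_gt0 // natrD natrB // -/q in e_le.
rewrite /pmas_weight -/q; lra.
Qed.
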